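(* If $\lambda$ is weakly compact, then $\lambda$ satisfies the strong system property.
   Context: Let $\lambda$ be an infinite regular cardinal. A relation $R$ is tree-like if $a<_R c$ and $b<_R c$ imply $a,b$ are $R$-comparable ($a=b$, $a<_Rb$ or $b<_Ra$). A $\lambda$-system is $S=\langle\{\{\alpha\}\times\kappa_\alpha\mid\alpha\in I\},\mathcal{R}\rangle$ with $I\subseteq\lambda$ unbounded, $0<\kappa_\alpha<\lambda$, levels $S_\alpha=\{\alpha\}\times\kappa_\alpha$ (and $S$ also denotes their union), $\mathcal{R}$ a set of binary transitive tree-like relations on $S$ with $|\mathcal{R}|<\lambda$, such that $(\alpha_0,\beta_0)<_R(\alpha_1,\beta_1)$ implies $\alpha_0<\alpha_1$, and for all $\alpha_0<\alpha_1$ in $I$ some elements of $S_{\alpha_0}$, $S_{\alpha_1}$ are related by some $R\in\mathcal{R}$. It is strong if for all $\alpha_0<\alpha_1$ in $I$ and every $\beta_1<\kappa_{\alpha_1}$ there are $\beta_0<\kappa_{\alpha_0}$ and $R\in\mathcal{R}$ with $(\alpha_0,\beta_0)<_R(\alpha_1,\beta_1)$. $\langle I\times\kappa,\mathcal{R}\rangle$ denotes a system with all $\kappa_\alpha=\kappa$. A branch through $R$ is a set of pairwise $R$-comparable elements; it is cofinal if it meets $S_\alpha$ for unboundedly many $\alpha\in I$. $\lambda$ satisfies the strong system property if every strong $\lambda$-system $S=\langle I\times\kappa,\mathcal{R}\rangle$ with $|\mathcal{R}|^+<\lambda$ has a cofinal branch. *)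

(* Ordinals below lambda are modelled as elements of a type L
   carrying a strict well-order [lt]; lambda itself is the order type of L. *)
From Stdlib Require Import Classical.

Set Implicit Arguments.

Definition seg {L : Type} (lt : L -> L -> Prop) (x : L) : Type := {y : L | lt y x}.

Definition inj_into (A B : Type) : Prop :=
  exists f : A -> B, forall a b, f a = f b -> a = b.

Definition le_of {L : Type} (lt : L -> L -> Prop) (x y : L) : Prop := lt x y \/ x = y.

Definition is_wellorder {L : Type} (lt : L -> L -> Prop) : Prop :=
  well_founded lt /\
  (forall x y z, lt x y -> lt y z -> lt x z) /\
  (forall x y, lt x y \/ x = y \/ lt y x).

Definition is_cardinal_type {L : Type} (lt : L -> L -> Prop) : Prop :=
  forall x : L, ~ inj_into L (seg lt x).

Definition is_cardinal_below {L : Type} (lt : L -> L -> Prop) (k : L) : Prop :=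
  forall j, lt j k -> ~ inj_into (seg lt k) (seg lt j).

(* lambda is weakly compact: lambda is an uncountable cardinal and
   lambda -> (lambda)^2_2 *)
Definition weakly_compact {L : Type} (lt : L -> L -> Prop) : Prop :=
  is_wellorder lt /\ is_cardinal_type lt /\
  (exists x : L, inj_into nat (seg lt x)) /\
  (forall c : L -> L -> bool,
     exists (H : L -> Prop) (col : bool),
       inj_into L {x : L | H x} /\
       (forall x y, H x -> H y -> lt x y -> c x y = col)).

(* A strong lambda-system <I x kappa, R>, with R = { rel r | r < rho }.
   Elements of the system are pairs (alpha, beta) with I alpha and beta < kappa. *)
Section Systems.
Variables (L : Type) (lt : L -> L -> Prop).

Definition in_sys (I : L -> Prop) (kappa : L) (p : L * L) : Prop :=
  I (fst p) /\ lt (snd p) kappa.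

Definition strong_system (I : L -> Prop) (kappa rho : L)
  (rel : seg lt rho -> L * L -> L * L -> Prop) : Prop :=
  (forall g, exists a, I a /\ le_of lt g a) /\
  (exists b, lt b kappa) /\ is_cardinal_below lt kappa /\
  (forall r p q s, in_sys I kappa p -> in_sys I kappa q -> in_sys I kappa s ->
     rel r p q -> rel r q s -> rel r p s) /\
  (forall r a b c, in_sys I kappa a -> in_sys I kappa b -> in_sys I kappa c ->
     rel r a c -> rel r b c -> a = b \/ rel r a b \/ rel r b a) /\
  (forall r p q, in_sys I kappa p -> in_sys I kappa q -> rel r p q ->
     lt (fst p) (fst q)) /\
  (forall a0 a1, I a0 -> I a1 -> lt a0 a1 ->
     exists b0 b1 r, lt b0 kappa /\ lt b1 kappa /\ rel r (a0, b0) (a1, b1)) /\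
  (forall a0 a1 b1, I a0 -> I a1 -> lt a0 a1 -> lt b1 kappa ->
     exists b0 r, lt b0 kappa /\ rel r (a0, b0) (a1, b1)).

(* |R|^+ < lambda : some mu < lambda has cardinality > |rho| *)
Definition succ_card_below (rho : L) : Prop :=
  exists mu : L, ~ inj_into (seg lt mu) (seg lt rho).

Definition has_cofinal_branch (I : L -> Prop) (kappa rho : L)
  (rel : seg lt rho -> L * L -> L * L -> Prop) : Prop :=
  exists (r : seg lt rho) (br : L * L -> Prop),
    (forall p, br p -> in_sys I kappa p) /\
    (forall p q, br p -> br q -> p = q \/ rel r p q \/ rel r q p) /\
    (forall g, exists a b, le_of lt g a /\ br (a, b)).

End Systems.

Definition strong_system_property {L : Type} (lt : L -> L -> Prop) : Prop :=
  forall (I : L -> Prop) (kappa rho : L) (rel : seg lt rho -> L * L -> L * L -> Prop),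
    @strong_system L lt I kappa rho rel -> @succ_card_below L lt rho ->
    @has_cofinal_branch L lt I kappa rho rel.

(* For a < x, strongness gives a label (b, r) with (a, b) <_r (x', b0), where x' >= x is
   a level of the system.  Comparing the label sequences of the points x lexicographically
   and applying lambda -> (lambda)^2_2 yields an unbounded set H on which these sequences
   are lexicographically monotone; since the labels range over a well-order of size
   < lambda and lambda is regular, each coordinate a is then eventually constant on H.
   By pigeonhole a single label (b, r) is the eventual label of unboundedly many levels a.
   Any two of the corresponding nodes (a, b) lie <_r-below a common node (x', b0), so
   tree-likeness makes them an r-branch, which is cofinal. *)

From Stdlib Require Import Classical ClassicalEpsilon Relation_Operators Wellfounded.

Set Implicit Arguments.
Unset Strict Implicit.

Lemma sig_eq {A : Type} (P : A -> Prop) (u v : {a | P a}) : proj1_sig u = proj1_sig v -> u = v.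
Proof. apply eq_sig_hprop; intros; apply proof_irrelevance. Qed.

Lemma wf_irrefl {A : Type} {R : A -> A -> Prop} : well_founded R -> forall x, ~ R x x.
Proof. intros W x. induction (W x) as [x _ IH]. intros Hx. exact (IH x Hx Hx). Qed.

Lemma wf_asym {A : Type} {R : A -> A -> Prop} : well_founded R -> forall x y, R x y -> ~ R y x.
Proof.
  intros W x. induction (W x) as [x _ IH]. intros y Hxy Hyx. exact (IH y Hyx x Hyx Hxy).
Qed.

Lemma wf_exists_min {A : Type} {R : A -> A -> Prop} : well_founded R ->
  forall P : A -> Prop, (exists x, P x) -> exists m, P m /\ forall y, P y -> ~ R y m.
Proof.
  intros W P [x Px]. apply NNPP; intros Nmin. revert Px. induction (W x) as [x _ IH].
  intros Px. apply Nmin. exists x. split; [exact Px|]. intros y Py Ryx. exact (IH y Ryx Py).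
Qed.

Definition trichotomous {A : Type} (R : A -> A -> Prop) : Prop :=
  forall x y, x = y \/ R x y \/ R y x.

Lemma trichotomous_slexprod {A B : Type} (RA : A -> A -> Prop) (RB : B -> B -> Prop) :
  trichotomous RA -> trichotomous RB -> trichotomous (slexprod A B RA RB).
Proof.
  intros TA TB [a b] [a' b'].
  destruct (TA a a') as [<-|[H|H]]; [|right; left; constructor; exact H
                                        |right; right; constructor; exact H].
  destruct (TB b b') as [<-|[H|H]]; [left; reflexivity| |];
    [right; left | right; right]; apply right_slex; exact H.
Qed.

Lemma inj_into_trans (A B C : Type) : inj_into A B -> inj_into B C -> inj_into A C.
Proof.
  intros [f Hf] [g Hg]. exists (fun a => g (f a)). intros a b E. apply Hf, Hg, E.
Qed.

(* Hilbert's hotel: move [e n] to [e (S n)] and put the new point at [e 0]. *)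
Lemma inj_option_of_inj_nat (A : Type) : inj_into nat A -> inj_into (option A) A.
Proof.
  intros [e He].
  set (shift y := match excluded_middle_informative (exists n, y = e n) with
    | left p => e (S (proj1_sig (constructive_indefinite_description _ p)))
    | right _ => y end).
  assert (Hshift : forall y, (exists n, y = e n /\ shift y = e (S n)) \/
                             ((forall n, y <> e n) /\ shift y = y)).
  { intros y. unfold shift. destruct (excluded_middle_informative _) as [p|p].
    - destruct (constructive_indefinite_description _ p) as [n Hn]. left; eauto.
    - right. split; [|reflexivity]. intros n Hn. apply p; eauto. }
  exists (fun o => match o with None => e 0 | Some y => shift y end).
  intros [y|] [y'|] E.
  - f_equal. destruct (Hshift y) as [[n [-> Hy]]|[Ny Hy]];
      destruct (Hshift y') as [[n' [-> Hy']]|[Ny' Hy']]; rewrite Hy, Hy' in E.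
    + apply He in E. injection E as ->. reflexivity.
    + exfalso. exact (Ny' _ (eq_sym E)).
    + exfalso. exact (Ny _ E).
    + exact E.
  - exfalso. destruct (Hshift y) as [[n [_ Hy]]|[Ny Hy]]; rewrite Hy in E.
    + apply He in E. discriminate E.
    + exact (Ny 0 E).
  - exfalso. destruct (Hshift y') as [[n [_ Hy']]|[Ny' Hy']]; rewrite Hy' in E.
    + apply He in E. discriminate E.
    + exact (Ny' 0 (eq_sym E)).
  - reflexivity.
Qed.

Definition asbool (P : Prop) : bool :=
  if excluded_middle_informative P then true else false.

Lemma asbool_true (P : Prop) : asbool P = true <-> P.
Proof. unfold asbool. destruct (excluded_middle_informative P); split; congruence. Qed.

Section WellOrder.
Variables (L : Type) (lt : L -> L -> Prop).
Hypothesis WO : is_wellorder lt.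

Lemma lt_wf : well_founded lt.
Proof. exact (proj1 WO). Qed.

Lemma lt_trans x y z : lt x y -> lt y z -> lt x z.
Proof. exact (proj1 (proj2 WO) x y z). Qed.

Lemma lt_trichotomy x y : lt x y \/ x = y \/ lt y x.
Proof. exact (proj2 (proj2 WO) x y). Qed.

Lemma le_lt_trans x y z : le_of lt x y -> lt y z -> lt x z.
Proof. intros [H| <-] H'; [exact (lt_trans H H') | exact H']. Qed.

Lemma lt_le_trans x y z : lt x y -> le_of lt y z -> lt x z.
Proof. intros H [H'| <-]; [exact (lt_trans H H') | exact H]. Qed.

Lemma not_lt_le x y : ~ lt x y -> le_of lt y x.
Proof. intros N. destruct (lt_trichotomy x y) as [H|[<-|H]]; [tauto | right | left]; auto. Qed.

Lemma exists_above2 a b : exists m, forall x, lt m x -> lt a x /\ lt b x.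
Proof.
  destruct (lt_trichotomy a b) as [H|[<-|H]].
  - exists b. intros x Hx. split; [exact (lt_trans H Hx) | exact Hx].
  - exists a. tauto.
  - exists a. intros x Hx. split; [exact Hx | exact (lt_trans H Hx)].
Qed.

Definition no_greatest : Prop := forall x, exists y, lt x y.

Definition unbounded (H : L -> Prop) : Prop := forall g, exists a, H a /\ lt g a.

Lemma unbounded_above (H : L -> Prop) m : unbounded H -> unbounded (fun h => H h /\ lt m h).
Proof.
  intros HU g. destruct (exists_above2 g m) as [z Hz]. destruct (HU z) as [a [Ha Hza]].
  destruct (Hz a Hza). eauto.
Qed.

Lemma unbounded_of_cofinal (H : L -> Prop) :
  no_greatest -> (forall g, exists a, H a /\ le_of lt g a) -> unbounded H.
Proof.
  intros NM Hcof g. destruct (NM g) as [g' Hg']. destruct (Hcof g') as [a [Ha Le]].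
  exists a. split; [exact Ha | exact (lt_le_trans Hg' Le)].
Qed.

Definition pigeonhole (C : Type) : Prop :=
  forall (H : L -> Prop) (R : L -> C -> Prop), unbounded H ->
    (forall h, H h -> exists c, R h c) -> exists c, unbounded (fun h => H h /\ R h c).

Lemma pigeonhole_prod (A B : Type) : pigeonhole A -> pigeonhole B -> pigeonhole (A * B).
Proof.
  intros PA PB H R HU HR.
  destruct (PA H (fun h a => exists b, R h (a, b)) HU) as [a Ha].
  { intros h Hh. destruct (HR h Hh) as [[a b] Hc]. eauto. }
  destruct (PB (fun h => H h /\ exists b, R h (a, b)) (fun h b => R h (a, b)) Ha) as [b Hb].
  { intros h [_ [b Hb]]. eauto. }
  exists (a, b). intros g. destruct (Hb g) as [x [[[Hx _] Hr] Hl]]. eauto.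
Qed.

Definition regular : Prop :=
  forall (k : L) (h : L -> L), exists B, forall a, lt a k -> lt (h a) B.

Definition seg_lt (k : L) : seg lt k -> seg lt k -> Prop :=
  fun x y => lt (proj1_sig x) (proj1_sig y).

Lemma wf_seg_lt k : well_founded (@seg_lt k).
Proof. apply (wf_inverse_image _ _ lt), lt_wf. Qed.

Lemma trichotomous_seg_lt k : trichotomous (@seg_lt k).
Proof.
  intros x y. destruct (lt_trichotomy (proj1_sig x) (proj1_sig y)) as [E|[E|E]]; auto.
  left. apply sig_eq, E.
Qed.

Definition eventually_constant {C : Type} (H : L -> Prop) (g : L -> C) : Prop :=
  exists b v, forall x, H x -> lt b x -> g x = v.

Section Labels.
Variables (C : Type) (ltC : C -> C -> Prop).
Hypotheses (wfC : well_founded ltC) (totC : trichotomous ltC).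

Lemma eventually_constant_nonincreasing (H : L -> Prop) (g : L -> C) m : unbounded H ->
  (forall x y, H x -> H y -> lt m x -> lt x y -> ~ ltC (g x) (g y)) ->
  eventually_constant H g.
Proof.
  intros HU Mo.
  destruct (wf_exists_min wfC (P := fun c => exists h, H h /\ lt m h /\ g h = c))
    as [c [[x0 [H0 [L0 E0]]] Mn]].
  { destruct (HU m) as [h [Hh Hl]]. eauto. }
  exists x0, c. intros y Hy Hl.
  destruct (totC (g y) c) as [E|[E|E]]; [exact E | exfalso..].
  - apply (Mn (g y)); [exists y; repeat split; eauto using lt_trans | exact E].
  - apply (Mo x0 y); [..| rewrite E0]; assumption.
Qed.

Lemma eventually_constant_nondecreasing (H : L -> Prop) (g : L -> C) m :
  pigeonhole C -> unbounded H ->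
  (forall x y, H x -> H y -> lt m x -> lt x y -> ~ ltC (g y) (g x)) ->
  eventually_constant H g.
Proof.
  intros PC HU Mo.
  destruct (PC _ (fun h c => g h = c) (unbounded_above m HU)) as [c Hc]; [eauto|].
  destruct (Hc m) as [x0 [[[H0 L0] E0] _]].
  exists x0, c. intros y Hy Hl.
  assert (Ly : lt m y) by exact (lt_trans L0 Hl).
  destruct (totC (g y) c) as [E|[E|E]]; [exact E | exfalso..].
  - apply (Mo x0 y); [..| rewrite E0]; assumption.
  - destruct (Hc y) as [x1 [[[Hx1 _] E1] Hl1]].
    apply (Mo y x1); [..| rewrite E1]; assumption.
Qed.

Variable f : L -> L -> C.

(* [f a x] is coordinate [a] of row [x]; [lex_le x y] says row [x] is lexicographically
   at most row [y] on the coordinates below [x]. *)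
Definition lex_le (x y : L) : Prop :=
  forall a, lt a x -> (forall a', lt a' a -> f a' x = f a' y) -> ~ ltC (f a y) (f a x).

Lemma lex_homogeneous_eventually_constant (H : L -> Prop) :
  regular -> pigeonhole C -> unbounded H ->
  (forall x y, H x -> H y -> lt x y -> lex_le x y) \/
  (forall x y, H x -> H y -> lt x y -> ~ lex_le x y) ->
  forall a, eventually_constant H (f a).
Proof.
  intros REG PC HU Hom a. induction a as [a IH] using (well_founded_ind lt_wf).
  assert (Hbound : forall a', exists b, lt a' a ->
            exists v, forall x, H x -> lt b x -> f a' x = v).
  { intros a'. destruct (classic (lt a' a)) as [La|La].
    - destruct (IH a' La) as [b Hb]. eauto.
    - exists a. tauto. }
  apply choice in Hbound. destruct Hbound as [bf Hbf].
  destruct (REG a bf) as [B HB]. destruct (exists_above2 B a) as [m Hm].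
  (* beyond [m], the rows agree below [a], so comparing them comes down to coordinate [a] *)
  assert (Agree : forall x y, H x -> H y -> lt m x -> lt x y ->
            forall a', lt a' a -> f a' x = f a' y).
  { intros x y Hx Hy Lx Lxy a' La. destruct (Hbf a' La) as [v Hv].
    assert (lt (bf a') x) by exact (lt_trans (HB a' La) (proj1 (Hm x Lx))).
    rewrite (Hv x), (Hv y); eauto using lt_trans. }
  destruct Hom as [Hom|Hom].
  - apply (eventually_constant_nondecreasing (m := m) PC HU).
    intros x y Hx Hy Lx Lxy.
    exact (Hom x y Hx Hy Lxy a (proj2 (Hm x Lx)) (Agree x y Hx Hy Lx Lxy)).
  - apply (eventually_constant_nonincreasing (m := m) HU).
    intros x y Hx Hy Lx Lxy Q. apply (Hom x y Hx Hy Lxy). intros a0 La0 Pre Q0.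
    destruct (lt_trichotomy a0 a) as [A|[<-|A]].
    + rewrite (Agree x y Hx Hy Lx Lxy a0 A) in Q0. exact (wf_irrefl wfC Q0).
    + exact (wf_asym wfC Q Q0).
    + rewrite (Pre a A) in Q. exact (wf_irrefl wfC Q).
Qed.

End Labels.
End WellOrder.

Definition partition_property {L : Type} (lt : L -> L -> Prop) : Prop :=
  forall c : L -> L -> bool,
    exists (H : L -> Prop) (col : bool),
      inj_into L {x : L | H x} /\ (forall x y, H x -> H y -> lt x y -> c x y = col).

Section Cardinal.
Variables (L : Type) (lt : L -> L -> Prop).
Hypotheses (WO : is_wellorder lt) (CT : is_cardinal_type lt).

Lemma inj_into_seg (S : L -> Prop) g : (forall x, S x -> lt x g) -> inj_into {x | S x} (seg lt g).
Proof.
  intros B. exists (fun s => exist _ (proj1_sig s) (B _ (proj2_sig s))).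
  intros s t E. apply sig_eq. exact (f_equal (@proj1_sig _ _) E).
Qed.

Lemma no_greatest_of_infinite : (exists x, inj_into nat (seg lt x)) -> no_greatest lt.
Proof.
  intros [x0 Hx0] m. apply NNPP; intros N.
  assert (Hm : forall y, y <> m -> lt y m).
  { intros y Hy. destruct (lt_trichotomy WO y m) as [H|[H|H]]; [exact H | tauto |].
    exfalso. eauto. }
  apply (CT (x := m)). apply inj_into_trans with (option (seg lt m)).
  - exists (fun y => match excluded_middle_informative (y = m) with
                     | left _ => None | right n => Some (exist _ y (Hm y n)) end).
    intros y y'. do 2 destruct (excluded_middle_informative _); intros E;
      try discriminate E; [congruence|].
    injection E as E. exact E.
  - apply inj_option_of_inj_nat. apply inj_into_trans with (seg lt x0); [exact Hx0|].
    destruct (classic (x0 = m)) as [<-|Nx0].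
    + exists (fun y => y). tauto.
    + apply inj_into_seg. intros y Hy. exact (lt_trans WO Hy (Hm x0 Nx0)).
Qed.

Hypothesis NM : no_greatest lt.

Lemma unbounded_of_inj (S : L -> Prop) : inj_into L {x | S x} -> unbounded lt S.
Proof.
  intros Inj g. apply NNPP; intros N. destruct (NM g) as [g' Hg'].
  apply (CT (x := g')). apply inj_into_trans with (1 := Inj). apply inj_into_seg.
  intros x Sx. apply (le_lt_trans WO (y := g)); [|exact Hg'].
  apply (not_lt_le WO). intros Hx. apply N; eauto.
Qed.

(* If every colour class were bounded, colour each x by a class reaching above x and
   apply the partition property to "same colour": a homogeneous set of size lambda would
   either lie in one bounded class or inject into [seg lt k]. *)
Lemma pigeonhole_seg : partition_property lt -> forall k, pigeonhole lt (seg lt k).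
Proof.
  intros Part k H R HU HR. apply NNPP; intros N.
  assert (Hbnd : forall c, exists b, forall a, H a /\ R a c -> ~ lt b a).
  { intros c. apply NNPP; intros N2. apply N. exists c. intros g.
    apply NNPP; intros N3. apply N2. exists g. intros a Ha Hl. apply N3; eauto. }
  apply choice in Hbnd. destruct Hbnd as [bnd Hbnd].
  assert (Hblk : forall x, exists c, exists h, H h /\ lt x h /\ R h c).
  { intros x. destruct (HU x) as [h [Hh Hxh]]. destruct (HR h Hh) as [c Hc]. eauto. }
  apply choice in Hblk. destruct Hblk as [blk Hblk].
  assert (Lb : forall x, lt x (bnd (blk x))).
  { intros x. destruct (Hblk x) as [h [Hh [Hxh Hr]]].
    apply (lt_le_trans WO Hxh). apply (not_lt_le WO). apply Hbnd; auto. }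
  destruct (Part (fun x y => asbool (blk x = blk y))) as [S [col [Inj Hom]]].
  assert (Same : forall x y, S x -> S y -> x <> y -> (blk x = blk y <-> col = true)).
  { intros x y Sx Sy Nxy. destruct (lt_trichotomy WO x y) as [A|[A|A]]; [| tauto |].
    - rewrite <- (Hom x y Sx Sy A), asbool_true. tauto.
    - rewrite <- (Hom y x Sy Sx A), asbool_true. split; auto. }
  destruct col.
  - destruct (unbounded_of_inj Inj k) as [x0 [S0 _]].
    destruct (unbounded_of_inj Inj (bnd (blk x0))) as [y [Sy Ly]].
    apply (wf_asym (lt_wf WO) Ly).
    destruct (classic (y = x0)) as [->|Ny]; [apply Lb|].
    rewrite <- (proj2 (Same y x0 Sy S0 Ny) eq_refl). apply Lb.
  - apply (CT (x := k)). apply inj_into_trans with (1 := Inj).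
    exists (fun s => blk (proj1_sig s)). intros s t E. apply sig_eq. apply NNPP; intros Nst.
    discriminate (proj1 (Same _ _ (proj2_sig s) (proj2_sig t) Nst) E).
Qed.

Lemma regular_of_pigeonhole : (forall k, pigeonhole lt (seg lt k)) -> regular lt.
Proof.
  intros PS k h. apply NNPP; intros N.
  assert (U : unbounded lt (fun y => exists a, lt a k /\ y = h a)).
  { intros g. destruct (NM g) as [g' Hg']. apply NNPP; intros N2. apply N. exists g'.
    intros a Ha. apply NNPP; intros N3. apply N2. exists (h a). split; [eauto|].
    apply (lt_le_trans WO Hg'). apply (not_lt_le WO N3). }
  destruct (PS k _ (fun y (a : seg lt k) => y = h (proj1_sig a)) U) as [a Ha].
  { intros y [a [Ha E]]. exists (exist _ a Ha). exact E. }
  destruct (Ha (h (proj1_sig a))) as [y [[_ ->] Hl]]. exact (wf_irrefl (lt_wf WO) Hl).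
Qed.

Lemma labels_eventually_constant (C : Type) (ltC : C -> C -> Prop) :
  partition_property lt -> regular lt -> well_founded ltC -> trichotomous ltC ->
  pigeonhole lt C -> forall f : L -> L -> C,
  exists H, unbounded lt H /\ forall a, eventually_constant lt H (f a).
Proof.
  intros Part REG wfC totC PC f.
  destruct (Part (fun x y => asbool (lex_le lt ltC f x y))) as [S [col [Inj Hom]]].
  exists S. split; [exact (unbounded_of_inj Inj)|].
  apply (lex_homogeneous_eventually_constant WO wfC totC REG PC (unbounded_of_inj Inj)).
  destruct col; [left | right]; intros x y Sx Sy Lxy; pose proof (Hom x y Sx Sy Lxy) as E.
  - apply asbool_true, E.
  - intros P. apply asbool_true in P. congruence.
Qed.

End Cardinal.

Lemma strong_system_labelling (L : Type) (lt : L -> L -> Prop) (I : L -> Prop)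
  (kappa rho : L) (rel : seg lt rho -> L * L -> L * L -> Prop) (b0 : L) :
  is_wellorder lt -> no_greatest lt -> @strong_system L lt I kappa rho rel -> lt b0 kappa ->
  exists (node : L -> L) (f : L -> L -> seg lt kappa * seg lt rho),
    (forall x, I (node x)) /\
    (forall a x, I a -> lt a x -> rel (snd (f a x)) (a, proj1_sig (fst (f a x))) (node x, b0)).
Proof.
  intros WO NM [HIu [_ [_ [_ [_ [_ [_ Hstr]]]]]]] Hb0.
  destruct (choice _ HIu) as [node Hnode].
  destruct (HIu b0) as [a0 [Ia0 _]].
  destruct (unbounded_of_cofinal WO NM HIu a0) as [a1 [Ia1 La]].
  destruct (Hstr a0 a1 b0 Ia0 Ia1 La Hb0) as [b1 [r1 [Hb1 _]]].
  assert (Hf : forall p : L * L, exists c : seg lt kappa * seg lt rho,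
            I (fst p) -> lt (fst p) (snd p) ->
            rel (snd c) (fst p, proj1_sig (fst c)) (node (snd p), b0)).
  { intros [a x]; simpl.
    destruct (classic (I a /\ lt a x)) as [[Ia Lax]|N]; [|exists (exist _ b1 Hb1, r1); tauto].
    destruct (Hnode x) as [Ix Le].
    destruct (Hstr a (node x) b0 Ia Ix (lt_le_trans WO Lax Le) Hb0) as [b [r [Hb Hr]]].
    exists (exist _ b Hb, r). intros _ _. exact Hr. }
  destruct (choice _ Hf) as [g Hg].
  exists node, (fun a x => g (a, x)). split.
  - intros x. exact (proj1 (Hnode x)).
  - intros a x Ia Lax. exact (Hg (a, x) Ia Lax).
Qed.

Lemma cofinal_branch_of_common_label (L : Type) (lt : L -> L -> Prop) (I : L -> Prop)
  (kappa rho : L) (rel : seg lt rho -> L * L -> L * L -> Prop) (b0 : L) (node : L -> L)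
  (f : L -> L -> seg lt kappa * seg lt rho) (H : L -> Prop) (c : seg lt kappa * seg lt rho) :
  is_wellorder lt -> @strong_system L lt I kappa rho rel -> lt b0 kappa ->
  (forall x, I (node x)) ->
  (forall a x, I a -> lt a x -> rel (snd (f a x)) (a, proj1_sig (fst (f a x))) (node x, b0)) ->
  unbounded lt H ->
  unbounded lt (fun a => I a /\ exists b, forall x, H x -> lt b x -> f a x = c) ->
  @has_cofinal_branch L lt I kappa rho rel.
Proof.
  intros WO [_ [_ [_ [_ [Htree _]]]]] Hb0 Inode Hf HU HA.
  set (A := fun a => I a /\ exists b, forall x, H x -> lt b x -> f a x = c).
  set (p := fun a : L => (a, proj1_sig (fst c))).
  assert (Below : forall a a', A a -> A a' -> exists x,
            rel (snd c) (p a) (node x, b0) /\ rel (snd c) (p a') (node x, b0)).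
  { intros a a' [Ia [b Hb]] [Ia' [b' Hb']].
    destruct (exists_above2 WO a b) as [m1 Hm1].
    destruct (exists_above2 WO a' b') as [m2 Hm2].
    destruct (exists_above2 WO m1 m2) as [m Hm].
    destruct (HU m) as [x [Hx Lx]]. destruct (Hm x Lx) as [L1 L2].
    destruct (Hm1 x L1) as [La Lb]. destruct (Hm2 x L2) as [La' Lb'].
    pose proof (Hf a x Ia La) as R. pose proof (Hf a' x Ia' La') as R'.
    rewrite (Hb x Hx Lb) in R. rewrite (Hb' x Hx Lb') in R'. exists x. split; assumption. }
  assert (Sys : forall a, I a -> in_sys lt I kappa (p a)).
  { intros a Ia. split; [exact Ia | exact (proj2_sig (fst c))]. }
  exists (snd c), (fun q => exists a, A a /\ q = p a). split; [|split].
  - intros q [a [[Ia _] ->]]. exact (Sys a Ia).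
  - intros q q' [a [Aa ->]] [a' [Aa' ->]]. destruct (Below a a' Aa Aa') as [x [R R']].
    apply (Htree (snd c) _ _ (node x, b0)); [apply Sys, Aa | apply Sys, Aa' | | exact R | exact R'].
    split; [exact (Inode x) | exact Hb0].
  - intros g. destruct (HA g) as [a [Aa Lg]]. exists a, (proj1_sig (fst c)).
    split; [left; exact Lg | exists a; split; [exact Aa | reflexivity]].
Qed.

Theorem mainTheorem5 (L : Type) (lt : L -> L -> Prop) :
  weakly_compact lt -> strong_system_property lt.
Proof.
  intros [WO [CT [Hinf Part]]] I kappa rho rel Hsys _.
  pose proof (no_greatest_of_infinite WO CT Hinf) as NM.
  pose proof (pigeonhole_seg WO CT NM Part) as PS.
  pose proof Hsys as [HIu [[b0 Hb0] _]].
  destruct (strong_system_labelling WO NM Hsys Hb0) as [node [f [Inode Hf]]].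
  pose proof (pigeonhole_prod (PS kappa) (PS rho)) as PC.
  destruct (labels_eventually_constant WO CT NM Part (regular_of_pigeonhole WO NM PS)
              (wf_slexprod _ _ _ _ (wf_seg_lt WO (k := kappa)) (wf_seg_lt WO (k := rho)))
              (trichotomous_slexprod (trichotomous_seg_lt WO (k := kappa))
                                     (trichotomous_seg_lt WO (k := rho)))
              PC f) as [H [HU Hev]].
  destruct (PC I (fun a c => exists b, forall x, H x -> lt b x -> f a x = c)
              (unbounded_of_cofinal WO NM HIu)) as [c Hc].
  { intros a _. destruct (Hev a) as [b [v Hv]]. eauto. }
  exact (cofinal_branch_of_common_label WO Hsys Hb0 Inode Hf HU Hc).
Qed.
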